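(* Assume $\eta$ is supported on $\{\mathbf{x}\in E:|\mathbf{x}|_\infty\le R\}$ for some $R>0$. Let $\rho$ be a Borel probability measure on $\mathsf{X}$ and let $Y$ be a discrete-time Markov process on $\mathsf{X}$ with transition kernel $\mu$ and $Y_0\sim\rho$. Let $k$ be a nonnegative integer. Then $g(Y_{k+1})\le g(Y_k)+R$ almost surely, and consequently $g(Y_k)\le g(Y_0)+kR$ almost surely.
   Context: Fix $\theta_a,\theta_d>0$, positive integers $n,N$, $E=\mathbb{R}^N$ with the $\infty$-norm $|\cdot|_\infty$, and a Borel probability measure $\eta$ on $E$ with finite mean. $[k]=\{0,\dots,k-1\}$; $|\psi|=\sum_{i\in[n]}\psi(i)$. State space: $\mathsf{X}=\{(\psi,\mathbf{v})\in\{0,1\}^{[n]}\times E^{[n+1]}:\sum_{i\in[n]}\psi(i)(\mathbf{v}(i)-\mathbf{v}(n))=0\}$ (subspace of the product topology, discrete on $\{0,1\}$, Euclidean on $E$). For $i\in[n]$: $r_i(\psi)=\frac{\theta_d\psi(i)+\theta_a(1-\psi(i))}{\theta_d|\psi|+\theta_a(n-|\psi|)}$; $s_i(\psi)$ agrees with $\psi$ except $s_i(\psi)(i)=1-\psi(i)$. For $\mathsf{x}=(\psi,\mathbf{v})\in\mathsf{X}$, $\lambda_i^{\mathsf{x}}$ is the law of $(s_i(\psi),\mathbf{w})$ with $\mathbf{w}(j)=\mathbf{v}(j)$ for $j\in[n]\setminus\{i\}$ and $(\mathbf{w}(i),\mathbf{w}(n))$ equal to $(\mathbf{v}(i),\mathbf{v}(n))$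 if $|\psi|=\psi(i)=1$; $(\mathbf{v}(i),\mathbf{v}(n)-\frac{\mathbf{v}(i)-\mathbf{v}(n)}{|\psi|-1})$ if $|\psi|>\psi(i)=1$; $(\mathbf{x}+\mathbf{v}(n),\frac{\mathbf{x}}{|\psi|+1}+\mathbf{v}(n))$ with $\mathbf{x}\sim\eta$ if $\psi(i)=0$. $\mu(\mathsf{x},B)=\sum_{i\in[n]}r_i(\psi)\lambda_i^{\mathsf{x}}(B)$. $f_i(\psi,\mathbf{v})=\mathbf{v}(i)$ for $i\in[n+1]$, and $g(\mathsf{x})=\max\{|f_i(\mathsf{x})|_\infty:i\in[n+1]\}$. *)

From HB Require Import structures.
From mathcomp Require Import all_boot all_order all_algebra.
From mathcomp Require Import all_classical all_reals all_analysis.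
Set Implicit Arguments. Unset Strict Implicit. Unset Printing Implicit Defensive.
Import Order.TTheory GRing.Theory Num.Theory.
Local Open Scope classical_set_scope.
Local Open Scope ring_scope.

(* E = R^N, represented as N.-tuple R; its canonical measurable structure is
   the product sigma-algebra of the Borel sets of R, i.e. the Borel sets of R^N. *)
Definition Evec (R : realType) (N : nat) := (N.-tuple R).

(* ambient space {0,1}^[n] x E^[n+1]; psi is an n.-tuple bool,
   v is an (n.+1).-tuple of vectors, v(n) being the last entry. *)
Definition state (R : realType) (n N : nat) :=
  (n.-tuple bool * (n.+1).-tuple (N.-tuple R))%type.

Section defs.
Variables (R : realType) (n N : nat).

Definition vadd (a b : N.-tuple R) : N.-tuple R := [tuple tnth a j + tnth b j | j < N].
Definition vsub (a b : N.-tuple R) : N.-tuple R := [tuple tnth a j - tnth b j | j < N].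
Definition vscale (c : R) (a : N.-tuple R) : N.-tuple R := [tuple c * tnth a j | j < N].

Definition supnorm (a : N.-tuple R) : R := \big[Num.max/0]_(j < N) `|tnth a j|.

Definition lidx (i : 'I_n) : 'I_n.+1 := widen_ord (leqnSn n) i.
Definition last_idx : 'I_n.+1 := ord_max.

Definition card_psi (psi : n.-tuple bool) : nat := \sum_(i < n) (tnth psi i : nat).

Definition Xset : set (state R n N) :=
  [set x | forall j : 'I_N,
     \sum_(i < n) (if tnth x.1 i
                   then tnth (tnth x.2 (lidx i)) j - tnth (tnth x.2 last_idx) j
                   else 0) = 0].

Definition rate (th_a th_d : R) (psi : n.-tuple bool) (i : 'I_n) : R :=
  (if tnth psi i then th_d else th_a) /
  (th_d * (card_psi psi)%:R + th_a * (n - card_psi psi)%:R).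

Definition flip (psi : n.-tuple bool) (i : 'I_n) : n.-tuple bool :=
  [tuple if j == i then ~~ tnth psi j else tnth psi j | j < n].

Definition upd2 (v : (n.+1).-tuple (N.-tuple R)) (i : 'I_n) (a b : N.-tuple R) :
  (n.+1).-tuple (N.-tuple R) :=
  [tuple if j == lidx i then a else if j == last_idx then b else tnth v j | j < n.+1].

(* the new state (s_i(psi), w) when the random vector drawn from eta is e *)
Definition step (x : state R n N) (i : 'I_n) (e : N.-tuple R) : state R n N :=
  let psi := x.1 in let v := x.2 in
  let vi := tnth v (lidx i) in let vn := tnth v last_idx in
  (flip psi i,
   if tnth psi i then
     (if card_psi psi == 1%N then upd2 v i vi vn
      else upd2 v i vi (vsub vn (vscale ((card_psi psi)%:R - 1)^-1 (vsub vi vn))))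
   else upd2 v i (vadd e vn) (vadd (vscale ((card_psi psi)%:R + 1)^-1 e) vn)).

Definition lambda (eta : probability (N.-tuple R) R) (x : state R n N) (i : 'I_n)
  (B : set (state R n N)) : \bar R :=
  eta [set e | B (step x i e)].

Definition mu (th_a th_d : R) (eta : probability (N.-tuple R) R)
  (x : state R n N) (B : set (state R n N)) : \bar R :=
  (\sum_(i < n) (rate th_a th_d x.1 i)%:E * lambda eta x i B)%E.

Definition fcoord (i : 'I_n.+1) (x : state R n N) : N.-tuple R := tnth x.2 i.
Definition gmax (x : state R n N) : R := \big[Num.max/0]_(i < n.+1) supnorm (fcoord i x).

Definition nat_filtration d (Omega : measurableType d) (Y : nat -> Omega -> state R n N)
  (k : nat) : set (set Omega) :=
  <<s \bigcup_(j in [set j : nat | (j <= k)%N]) preimage_set_system setT (Y j) measurable >>.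

Definition markov_process d (Omega : measurableType d) (P : probability Omega R)
  (Y : nat -> Omega -> state R n N)
  (kern : state R n N -> set (state R n N) -> \bar R)
  (rho : probability (state R n N) R) : Prop :=
  [/\ forall k, measurable_fun setT (Y k),
      forall k w, Xset (Y k w),
      forall B, measurable B -> P (Y 0%N @^-1` B) = rho B &
      forall k A B, nat_filtration Y k A -> measurable B ->
        P (A `&` Y k.+1 @^-1` B) = (\int[P]_(w in A) kern (Y k w) B)%E].

End defs.

From HB Require Import structures.
From mathcomp Require Import all_boot all_order all_algebra.
From mathcomp Require Import all_classical all_reals all_analysis.
From mathcomp Require Import ring measurable_realfun.
Import Order.TTheory GRing.Theory Num.Theory.
Local Open Scope classical_set_scope.
Local Open Scope ring_scope.
Set Implicit Arguments.
Unset Strict Implicit.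

(* A transition rewrites only v(i) and v(n).  An arriving vector is v(n) plus a
   draw of sup norm at most R, and v(n) then moves by a fraction of that draw.
   When a vector leaves, the constraint defining X makes the new v(n) the mean of
   the remaining active vectors, hence no larger than g.  So g grows by at most R
   along every transition; almost surely, because from any state with g + R < r
   the kernel puts no mass on {g > r}, and rational r cover every gap. *)

Lemma mean_predD1 (F : fieldType) (I : finType) (A : pred I) (a : I -> F)
    (b : F) (i : I) :
  A i -> \sum_(j in A) (a j - b) = 0 -> (#|[predD1 A & i]|%:R : F) != 0 ->
  b - (#|[predD1 A & i]|%:R)^-1 * (a i - b) =
  (#|[predD1 A & i]|%:R)^-1 * \sum_(j in [predD1 A & i]) a j.
Proof.
move=> Ai; rewrite (bigD1 i) //=.
set m := #|[predD1 A & i]|; set S := \sum_(j in _) a j.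
have -> : \sum_(j | (j \in A) && (j != i)) (a j - b) = S - b *+ m.
  by rewrite sumrB -sumr_const; congr (_ - _); apply: eq_bigl => j; rewrite andbC.
move=> /eqP; rewrite addr_eq0 => /eqP -> m0.
by rewrite -mulr_natr; field.
Qed.

Lemma norm_mean_le (R : numFieldType) (I : finType) (A : pred I) (a : I -> R) c :
  0 <= c -> (forall j, A j -> `|a j| <= c) ->
  `|(#|A|%:R)^-1 * \sum_(j in A) a j| <= c.
Proof.
move=> c0 ac; have [A0|Apos] := posnP #|A|.
  by rewrite A0 invr0 mul0r normr0.
rewrite normrM ger0_norm ?invr_ge0 ?ler0n // ler_pdivrMl ?ltr0n //.
apply: le_trans (ler_norm_sum _ _ _) _.
by apply: le_trans (ler_sum _ ac) _; rewrite sumr_const mulr_natl.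
Qed.

Section step_bound.
Variables (R : realType) (n N : nat).
Implicit Types (x : state R n N) (a e : N.-tuple R) (psi : n.-tuple bool).

Lemma norm_le_supnorm a j : `|tnth a j| <= supnorm a.
Proof. exact: (le_bigmax _ (fun j => `|tnth a j|)). Qed.

Lemma supnorm_ge0 a : 0 <= supnorm a.
Proof. exact: bigmax_ge_id. Qed.

Lemma supnorm_le a c : 0 <= c -> (forall j, `|tnth a j| <= c) -> supnorm a <= c.
Proof. by move=> c0 ac; apply: bigmax_le. Qed.

Lemma gmax_ge0 x : 0 <= gmax x.
Proof. exact: bigmax_ge_id. Qed.

Lemma norm_le_gmax x m j : `|tnth (tnth x.2 m) j| <= gmax x.
Proof.
apply: le_trans (norm_le_supnorm _ j) _.
exact: (le_bigmax _ (fun m => supnorm (fcoord m x))).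
Qed.

Lemma gmax_le x c :
  0 <= c -> (forall m j, `|tnth (tnth x.2 m) j| <= c) -> gmax x <= c.
Proof.
by move=> c0 xc; apply: bigmax_le => // m _; apply: supnorm_le => // j; apply: xc.
Qed.

Lemma card_psiE psi : card_psi psi = #|[pred i | tnth psi i]|.
Proof.
rewrite /card_psi -sum1_card [RHS]big_mkcond.
by apply: eq_bigr => i _; rewrite inE; case: (tnth psi i).
Qed.

(* By the constraint of [Xset], the recentred vector is the mean of the other active ones. *)
Lemma recentred_last_le x i j : Xset x -> tnth x.1 i -> card_psi x.1 != 1%N ->
  `|tnth (tnth x.2 (last_idx n)) j - ((card_psi x.1)%:R - 1)^-1 *
      (tnth (tnth x.2 (lidx i)) j - tnth (tnth x.2 (last_idx n)) j)| <= gmax x.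
Proof.
case: x => psi v /= /(_ j) Xj psi_i card1.
set A := [pred i | tnth psi i].
have cardA : card_psi psi = (1 + #|[predD1 A & i]|)%N.
  by rewrite card_psiE (cardD1 i) inE psi_i.
have m0 : (#|[predD1 A & i]|%:R : R) != 0.
  by rewrite pnatr_eq0; move: card1; rewrite cardA; case: #|_|.
rewrite cardA add1n -natr1 addrK.
rewrite (mean_predD1 (a := fun i => tnth (tnth v (lidx i)) j)) //.
  by apply: norm_mean_le => [|i' _]; [apply: gmax_ge0 | apply: (norm_le_gmax (psi, v))].
by rewrite big_mkcond -{}[RHS]Xj; apply: eq_bigr => i' _; rewrite inE.
Qed.

Lemma gmax_upd2_le psi psi' v i a b c :
  gmax (psi, v) <= c -> (forall j, `|tnth a j| <= c) -> (forall j, `|tnth b j| <= c) ->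
  gmax (psi', upd2 v i a b) <= c.
Proof.
move=> vc ac bc; apply: gmax_le => [|m j /=]; first exact: le_trans (gmax_ge0 _) vc.
rewrite /upd2 tnth_mktuple; case: ifP => _; first exact: ac.
case: ifP => _; first exact: bc.
exact: le_trans (norm_le_gmax (psi, v) m j) vc.
Qed.

Lemma gmax_step_le x i e Rad :
  Xset x -> supnorm e <= Rad -> gmax (step x i e) <= gmax x + Rad.
Proof.
case: x => psi v Xx eR; set vn := tnth v (last_idx n).
have gR : gmax (psi, v) <= gmax (psi, v) + Rad.
  by rewrite lerDl (le_trans (supnorm_ge0 e) eR).
have vR m j : `|tnth (tnth v m) j| <= gmax (psi, v) + Rad.
  exact: le_trans (norm_le_gmax (psi, v) m j) gR.
have eR' c j : `|c| <= 1 -> `|c * tnth e j + tnth vn j| <= gmax (psi, v) + Rad.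
  move=> c1; apply: le_trans (ler_normD _ _) _; rewrite addrC lerD //.
    exact: norm_le_gmax (psi, v) _ j.
  rewrite normrM; apply: le_trans (ler_piMl (normr_ge0 _) c1) _.
  exact: le_trans (norm_le_supnorm _ j) eR.
rewrite /step /=; case: ifP => psi_i; [case: ifP => card1|];
  apply: (gmax_upd2_le (psi := psi)) => // j; rewrite /vsub /vadd /vscale ?tnth_mktuple.
- exact: le_trans (recentred_last_le j Xx psi_i (negbT card1)) gR.
- by rewrite -[tnth e j]mul1r eR' ?normr1.
- apply: eR'; rewrite ger0_norm ?invr_ge0 ?addr_ge0 // invf_le1 ?ltr_wpDl //.
  by rewrite lerDr.
Qed.
End step_bound.

Section measurability.
Context {d : measure_display} {T : measurableType d} {R : realType}.

Lemma measurable_bigmaxr (I : finType) (F : I -> T -> R) :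
  (forall i, measurable_fun setT (F i)) ->
  measurable_fun setT (fun x => \big[Num.max/0]_(i : I) F i x).
Proof.
move=> mF; rewrite unlock /=; elim: (index_enum I) => [|a s IH] /=.
  exact: measurable_cst.
exact: measurable_maxr.
Qed.

Lemma measurable_ltr_set (f g : T -> R) :
  measurable_fun setT f -> measurable_fun setT g -> measurable [set x | f x < g x].
Proof.
move=> mf mg; have := @measurable_fun_ltr _ _ _ _ _ _ mf mg measurableT [set true] I.
by rewrite setTI; congr measurable; apply/seteqP; split => x /=.
Qed.
End measurability.

Section model_measurability.
Variables (R : realType) (n N : nat).

Lemma measurable_supnorm : measurable_fun setT (@supnorm R N).
Proof.
apply: measurable_bigmaxr => j.
by apply: measurableT_comp; [exact: normr_measurable | exact: measurable_tnth].
Qed.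

Lemma measurable_gmax : measurable_fun setT (@gmax R n N).
Proof.
apply: measurable_bigmaxr => i.
apply: (measurableT_comp (f := @supnorm R N) (g := fun x : state R n N => tnth x.2 i)).
  exact: measurable_supnorm.
apply: (measurableT_comp (f := fun t => tnth t i) (g := snd)).
  exact: measurable_tnth.
exact: measurable_snd.
Qed.

Lemma measurable_upd2 d (T : measurableType d) (v : (n.+1).-tuple (N.-tuple R)) i
    (a b : T -> N.-tuple R) :
  measurable_fun setT a -> measurable_fun setT b ->
  measurable_fun setT (fun t => upd2 v i (a t) (b t)).
Proof.
move=> ma mb; apply/measurable_fun_tnthP => m.
rewrite /comp /upd2; under eq_fun do rewrite tnth_mktuple.
case: (m == lidx i) => //; case: (m == last_idx n) => //.
exact: measurable_cst.
Qed.

Lemma measurable_step (x : state R n N) i : measurable_fun setT (step x i).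
Proof.
apply: measurable_fun_pair; first exact: measurable_cst.
rewrite /step /=; case: (tnth x.1 i); first by case: ifP => _; exact: measurable_cst.
apply: measurable_upd2; apply/measurable_fun_tnthP => j;
  rewrite /comp /vadd /vscale; under eq_fun do rewrite !tnth_mktuple.
  exact: measurable_funD (measurable_tnth j) (measurable_cst _).
apply: measurable_funD (measurable_cst _).
exact: measurable_funM (measurable_cst _) (measurable_tnth j).
Qed.
End model_measurability.

Lemma ae_le_of_negligible_gaps d (T : measurableType d) (R : realType)
    (mu : measure T R) (f g : T -> R) :
  (forall r, mu.-negligible [set x | f x < r < g x]) -> {ae mu, forall x, g x <= f x}.
Proof.
move=> gaps; pose q_ m : R := ratr (odflt 0 (@unpickle rat m)).
apply: negligibleS (negligible_bigcup (fun m => gaps (q_ m))).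
move=> x /= /negP; rewrite -ltNge => fg.
have [q] := rat_in_itvoo fg; rewrite in_itv /= => qx.
by exists (pickle q) => //=; rewrite /q_ pickleK.
Qed.

Lemma probability_subsetC_eq0 d (T : measurableType d) (R : realType)
    (P : probability T R) (S A : set T) :
  measurable S -> measurable A -> P S = 1%E -> A `<=` ~` S -> P A = 0%E.
Proof.
move=> mS mA PS AS; apply/eqP; rewrite eq_le measure_ge0 andbT.
have <- : P (~` S) = 0%E by rewrite probability_setC // PS subee.
by apply: le_measure; rewrite ?inE //; exact: measurableC.
Qed.

Lemma markov_negligible_transition (R : realType) (n N : nat) d
    (Omega : measurableType d) (P : probability Omega R)
    (Y : nat -> Omega -> state R n N) (kern : state R n N -> set (state R n N) -> \bar R)
    (rho : probability (state R n N) R)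
    (k : nat) (A B : set (state R n N)) :
  markov_process P Y kern rho -> measurable A -> measurable B ->
  (forall w, A (Y k w) -> kern (Y k w) B = 0%E) ->
  P.-negligible (Y k @^-1` A `&` Y k.+1 @^-1` B).
Proof.
move=> [mY _ _ hM] mA mB kernAB.
have mYk j C : measurable C -> measurable (Y j @^-1` C).
  by move=> mC; rewrite -[_ @^-1` _]setTI; exact: mY.
apply/negligibleP; first by apply: measurableI; apply: mYk.
have Ak : nat_filtration Y k (Y k @^-1` A).
  by apply: sub_sigma_algebra; exists k => //=; exists A => //; rewrite setTI.
by apply: eq_trans (hM k _ _ Ak mB) _; apply: integral0_eq => w /kernAB.
Qed.

Section transition_bound.
Variables (R : realType) (n N : nat) (th_a th_d : R).
Variables (eta : probability (N.-tuple R) R) (Rad : R).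
Hypothesis eta_supp : eta [set e | supnorm e <= Rad] = 1%E.

Lemma mu_gmax_gt_eq0 (x : state R n N) r : Xset x -> gmax x + Rad < r ->
  mu th_a th_d eta x [set y | r < gmax y] = 0%E.
Proof.
move=> Xx xr; rewrite /mu big1 // => i _; rewrite /lambda.
have mB : measurable [set y : state R n N | r < gmax y].
  exact: measurable_ltr_set (measurable_cst _) (@measurable_gmax R n N).
have mS : measurable [set e : N.-tuple R | supnorm e <= Rad].
  rewrite (_ : [set e | _] = ~` [set e | Rad < supnorm e]).
    apply: measurableC.
    exact: measurable_ltr_set (measurable_cst _) (@measurable_supnorm R N).
  by apply/seteqP; split => e /=; rewrite leNgt => /negP.
rewrite (probability_subsetC_eq0 mS _ eta_supp) ?mule0 //.
  by have := measurable_step x i measurableT mB; rewrite setTI.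
move=> e /= re eR; move: (lt_trans xr re).
by rewrite ltNge (gmax_step_le i Xx eR).
Qed.

Lemma markov_gmax_step_le d (Omega : measurableType d) (P : probability Omega R)
    (rho : probability (state R n N) R) (Y : nat -> Omega -> state R n N) (k : nat) :
  markov_process P Y (mu th_a th_d eta) rho ->
  {ae P, forall w, gmax (Y k.+1 w) <= gmax (Y k w) + Rad}.
Proof.
move=> hY; apply: ae_le_of_negligible_gaps => r.
have mA : measurable [set x : state R n N | gmax x + Rad < r].
  apply: measurable_ltr_set (measurable_cst _).
  exact: measurable_funD (@measurable_gmax R n N) (measurable_cst _).
have mB : measurable [set x : state R n N | r < gmax x].
  exact: measurable_ltr_set (measurable_cst _) (@measurable_gmax R n N).
apply: negligibleS (markov_negligible_transition (k := k) hY mA mB _).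
  by move=> w /andP[].
by move=> w xr; apply: mu_gmax_gt_eq0 xr; case: hY.
Qed.
End transition_bound.

Theorem lemma3 (R : realType) (n N : nat) (th_a th_d : R)
  (eta : probability (N.-tuple R) R) (Rad : R)
  (d : measure_display) (Omega : measurableType d) (P : probability Omega R)
  (rho : probability (state R n N) R) (Y : nat -> Omega -> state R n N) (k : nat) :
  (0 < n)%N -> (0 < N)%N -> 0 < th_a -> 0 < th_d ->
  (forall j : 'I_N, eta.-integrable setT (fun e => (tnth e j)%:E)) ->
  0 < Rad ->
  eta [set e | supnorm e <= Rad] = 1%E ->
  rho (@Xset R n N) = 1%E ->
  markov_process P Y (mu th_a th_d eta) rho ->
  {ae P, forall w, gmax (Y k.+1 w) <= gmax (Y k w) + Rad} /\
  {ae P, forall w, gmax (Y k w) <= gmax (Y 0%N w) + k%:R * Rad}.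
Proof.
move=> _ _ _ _ _ _ eta_supp _ hY.
split; first exact: (markov_gmax_step_le eta_supp k hY).
elim: k => [|k IH]; first by apply: aeW => w; rewrite mul0r addr0.
apply: filterS2 IH (markov_gmax_step_le eta_supp k hY) => w h0k hk.
by rewrite -natr1 mulrDl mul1r addrA (le_trans hk) // lerD2r.
Qed.
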